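(* Let $p$ be a prime and $(G,\theta)$ an oriented profinite group. Then $(G,\theta)$ is cyclotomic if and only if for every natural number $n$ and every closed subgroup $H\le G$, the kernel of the map $H^2(H,\mathbb{Z}_p(1)/p^{n-1})\to H^2(H,\mathbb{Z}_p(1)/p^{n})$ induced by the injection in the short exact sequence $0\to\mathbb{Z}_p(1)/p^{n-1}\to\mathbb{Z}_p(1)/p^{n}\to\mathbb{Z}_p(1)/p\to0$ is trivial.
   Context: An orientation of a profinite group $G$ is a continuous homomorphism $\theta:G\to\mathbb{Z}_p^\times$ whose image lies in $1+p\mathbb{Z}_p$ (so the induced action on $\mathbb{F}_p$ is trivial). $\mathbb{Z}_p(1)$ is $\mathbb{Z}_p$ with $G$-action $g.x=\theta(g)x$, and $\mathbb{Z}_p(1)/p^m=\mathbb{Z}_p(1)/p^m\mathbb{Z}_p(1)$; the injection $\mathbb{Z}_p(1)/p^{n-1}\to\mathbb{Z}_p(1)/p^n$ is induced by multiplication by $p$. $(G,\theta)$ is cyclotomic if for every closed subgroup $H\le G$ and every $m$, the natural map $H^1(H,\mathbb{Z}_p(1)/p^m)\to H^1(H,\mathbb{Z}_p(1)/p)$ of continuous cohomology is surjective. *)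

From HB Require Import structures.
From mathcomp Require Import all_boot all_order all_algebra.
From mathcomp Require Import boolp classical_sets topology.
Set Implicit Arguments. Unset Strict Implicit. Unset Printing Implicit Defensive.
Import Order.TTheory GRing.Theory Num.Theory.
Local Open Scope classical_set_scope.
Local Open Scope ring_scope.

Definition is_profinite_group (T : topologicalType)
    (mul : T -> T -> T) (one : T) (inv : T -> T) : Prop :=
  [/\ (forall x y z, mul x (mul y z) = mul (mul x y) z),
      (forall x, mul one x = x),
      (forall x, mul (inv x) x = one),
      continuous (fun xy : T * T => mul xy.1 xy.2)
    & [/\ continuous inv, compact [set: T], hausdorff_space T
         & totally_disconnected [set: T]]].

Definition is_closed_subgroup (T : topologicalType)
    (mul : T -> T -> T) (one : T) (inv : T -> T) (H : set T) : Prop :=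
  [/\ closed H, H one,
      (forall x y, H x -> H y -> H (mul x y)) & (forall x, H x -> H (inv x))].

(* f : X -> int, read as a map into Z/q (discrete), is continuous on A
   (for the subspace topology), i.e. locally constant modulo q on A. *)
Definition loc_const_mod {X : topologicalType} (q : int) (A : set X)
    (f : X -> int) : Prop :=
  forall x, A x -> exists U : set X,
    [/\ open U, U x & forall y, A y -> U y -> (f y == f x %[mod q])%Z].

(* x : nat -> int represents an element of Z_p = lim Z/p^k,
   x k being the canonical representative in [0, p^k) of its image in Z/p^k. *)
Definition is_Zp (p : nat) (x : nat -> int) : Prop :=
  forall k, (0 <= x k < (p ^ k)%:Z) /\ (x k.+1 == x k %[mod (p ^ k)%:Z])%Z.

(* An orientation theta : G -> Z_p^x, continuous homomorphism with image in
   1 + pZ_p.  Continuity into the inverse limit = continuity of every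
   projection G -> Z/p^k (discrete). *)
Definition is_orientation (p : nat) (T : topologicalType)
    (mul : T -> T -> T) (theta : T -> nat -> int) : Prop :=
  [/\ (forall g, is_Zp p (theta g)),
      (forall g h k,
          (theta (mul g h) k == theta g k * theta h k %[mod (p ^ k)%:Z])%Z),
      (forall k, loc_const_mod (p ^ k)%:Z [set: T] (fun g => theta g k))
    & (forall g, theta g 1%N = 1)].

(* Module Z/p^m with action g.x = theta(g) x; elements represented by ints,
   all identities taken modulo p^m.  Inhomogeneous continuous cochains on H
   are represented by int-valued functions on T (resp. T*T), only their
   values on H (resp. H x H) modulo p^m mattering. *)
Section Cohomology.
Variables (p : nat) (T : topologicalType) (mul : T -> T -> T)
  (theta : T -> nat -> int) (H : set T).

Definition modulus (m : nat) : int := (p ^ m)%:Z.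

Definition cochain1 (m : nat) (c : T -> int) : Prop :=
  loc_const_mod (modulus m) H c.

Definition cochain2 (m : nat) (c : T * T -> int) : Prop :=
  loc_const_mod (modulus m) (H `*` H) c.

Definition cocycle1 (m : nat) (c : T -> int) : Prop :=
  cochain1 m c /\
  forall g h, H g -> H h ->
    (c (mul g h) == c g + theta g m * c h %[mod modulus m])%Z.

Definition coboundary1 (m : nat) (c : T -> int) : Prop :=
  exists a : int, forall g, H g ->
    (c g == theta g m * a - a %[mod modulus m])%Z.

Definition cocycle2 (m : nat) (c : T * T -> int) : Prop :=
  cochain2 m c /\
  forall g h k, H g -> H h -> H k ->
    (theta g m * c (h, k) - c (mul g h, k) + c (g, mul h k) - c (g, h)
       == 0 %[mod modulus m])%Z.

Definition coboundary2 (m : nat) (c : T * T -> int) : Prop :=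
  exists b : T -> int, cochain1 m b /\
    forall g h, H g -> H h ->
      (c (g, h) == theta g m * b h - b (mul g h) + b g %[mod modulus m])%Z.

(* H^1(H, Z_p(1)/p^m) -> H^1(H, Z_p(1)/p) (induced by reduction mod p)
   is surjective. *)
Definition H1_reduction_surjective (m : nat) : Prop :=
  forall c, cocycle1 1 c ->
    exists c', cocycle1 m c' /\ coboundary1 1 (fun g => c' g - c g).

(* The map H^2(H, Z_p(1)/p^(n-1)) -> H^2(H, Z_p(1)/p^n) induced by
   multiplication by p has trivial kernel. *)
Definition H2_mulp_injective (n : nat) : Prop :=
  forall c, cocycle2 n.-1 c ->
    coboundary2 n (fun gh => (p%:Z) * c gh) -> coboundary2 n.-1 c.

End Cohomology.

Definition cyclotomic (p : nat) (T : topologicalType) (mul : T -> T -> T)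
    (one : T) (inv : T -> T) (theta : T -> nat -> int) : Prop :=
  forall H : set T, is_closed_subgroup mul one inv H ->
    forall m : nat, (1 <= m)%N -> H1_reduction_surjective p mul theta H m.

From HB Require Import structures.
From mathcomp Require Import all_boot all_order all_algebra.
From mathcomp Require Import boolp classical_sets topology.
From mathcomp Require Import ring.
Set Implicit Arguments. Unset Strict Implicit. Unset Printing Implicit Defensive.
Import Order.TTheory GRing.Theory Num.Theory.
Local Open Scope classical_set_scope.
Local Open Scope ring_scope.

(* The Bockstein sequence
     H^1(Z_p(1)/p^n) -> H^1(Z_p(1)/p) -> H^2(Z_p(1)/p^(n-1)) -> H^2(Z_p(1)/p^n)
   of 0 -> Z_p(1)/p^(n-1) -> Z_p(1)/p^n -> Z_p(1)/p -> 0 is exact, so the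
   reduction map on H^1 is onto iff the connecting map is zero iff
   multiplication by p on H^2 is injective.  On cochains: a 1-cocycle c
   mod p, lifted to a cochain mod p^n, has coboundary p z with z a 2-cocycle
   mod p^(n-1), and c lifts to a cocycle iff z is a coboundary.  Since
   theta = 1 mod p, 1-coboundaries mod p vanish, so "lifts up to a coboundary"
   just means "lifts mod p". *)

Lemma eqz_modW (d d' x y : int) :
  (d' %| d)%Z -> (x == y %[mod d])%Z -> (x == y %[mod d'])%Z.
Proof. by rewrite !eqz_mod_dvd; apply: dvdz_trans. Qed.

Lemma eqz_mod_mul2l (k d x y : int) : k != 0 ->
  (k * x == k * y %[mod k * d])%Z = (x == y %[mod d])%Z.
Proof. by move=> k_neq0; rewrite !eqz_mod_dvd -mulrBr dvdz_mul2l. Qed.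

Lemma continuous_fst (U V : topologicalType) : continuous (@fst U V).
Proof. by move=> x; apply: cvg_fst. Qed.

Lemma continuous_snd (U V : topologicalType) : continuous (@snd U V).
Proof. by move=> x; apply: cvg_snd. Qed.

Section LocallyConstantModulo.
Variables (X : topologicalType) (A : set X).
Implicit Types (d k : int) (f g : X -> int).

Lemma loc_const_mod_dvd d d' f :
  (d' %| d)%Z -> loc_const_mod d A f -> loc_const_mod d' A f.
Proof.
move=> dvd_d'd fA x Ax; have [U [oU Ux fU]] := fA x Ax.
by exists U; split=> // y Ay Uy; apply: eqz_modW dvd_d'd (fU y Ay Uy).
Qed.

Lemma loc_const_mod_eq_in d f g :
  (forall x, A x -> f x = g x) -> loc_const_mod d A f -> loc_const_mod d A g.
Proof.
move=> fg fA x Ax; have [U [oU Ux fU]] := fA x Ax.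
by exists U; split=> // y Ay Uy; rewrite -!fg //; apply: fU.
Qed.

Lemma loc_const_mod_op2 (op : int -> int -> int) d f g :
  (forall a a' b b', (a == a' %[mod d])%Z -> (b == b' %[mod d])%Z ->
     (op a b == op a' b' %[mod d])%Z) ->
  loc_const_mod d A f -> loc_const_mod d A g ->
  loc_const_mod d A (fun x => op (f x) (g x)).
Proof.
move=> op_congr fA gA x Ax.
have [U [oU Ux fU]] := fA x Ax; have [V [oV Vx gV]] := gA x Ax.
exists (U `&` V); split; [exact: openI | by [] |].
by move=> y Ay [Uy Vy]; apply: op_congr; [apply: fU | apply: gV].
Qed.

Lemma loc_const_modD d f g : loc_const_mod d A f -> loc_const_mod d A g ->
  loc_const_mod d A (fun x => f x + g x).
Proof.
apply: (loc_const_mod_op2 (op := fun a b => a + b)).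
move=> a a' b b' /eqP ha /eqP hb.
by apply/eqP; rewrite -modzDm ha hb modzDm.
Qed.

Lemma loc_const_modB d f g : loc_const_mod d A f -> loc_const_mod d A g ->
  loc_const_mod d A (fun x => f x - g x).
Proof.
apply: (loc_const_mod_op2 (op := fun a b => a - b)).
move=> a a' b b'; rewrite !eqz_mod_dvd => ha hb.
have -> : a - b - (a' - b') = (a - a') - (b - b') by ring.
exact: rpredB.
Qed.

Lemma loc_const_modM d f g : loc_const_mod d A f -> loc_const_mod d A g ->
  loc_const_mod d A (fun x => f x * g x).
Proof.
apply: (loc_const_mod_op2 (op := fun a b => a * b)).
move=> a a' b b' /eqP ha /eqP hb.
by apply/eqP; rewrite -modzMm ha hb modzMm.
Qed.

Lemma loc_const_mod_mul2l k d f : k != 0 ->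
  loc_const_mod (k * d) A (fun x => k * f x) <-> loc_const_mod d A f.
Proof.
move=> k_neq0; split=> fA x Ax; have [U [oU Ux fU]] := fA x Ax;
  exists U; split=> // y Ay Uy; have := fU y Ay Uy;
  by rewrite eqz_mod_mul2l.
Qed.

(* Modulus 0 means locally constant on the nose. *)
Lemma loc_const_mod_modz d f :
  loc_const_mod d A f -> loc_const_mod 0 A (fun x => (f x %% d)%Z).
Proof.
move=> fA x Ax; have [U [oU Ux fU]] := fA x Ax.
by exists U; split=> // y Ay Uy; rewrite !modz0; apply: fU.
Qed.

Lemma loc_const_mod_comp (Y : topologicalType) (B : set Y) (phi : X -> Y) d
    (f : Y -> int) :
  continuous phi -> (forall x, A x -> B (phi x)) ->
  loc_const_mod d B f -> loc_const_mod d A (f \o phi).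
Proof.
move=> phi_cont AB fB x Ax; have [U [oU Ux fU]] := fB _ (AB x Ax).
exists (phi @^-1` U); split=> //; first by move/continuousP: phi_cont; apply.
by move=> y Ay Uy; apply: fU (AB y Ay) Uy.
Qed.

End LocallyConstantModulo.

Section Bockstein.
Variables (p : nat) (T : topologicalType) (mul : T -> T -> T)
  (theta : T -> nat -> int) (H : set T).
Hypothesis p_prime : prime p.
Hypothesis theta_orientation : is_orientation p mul theta.
Hypothesis mul_assoc : associative mul.
Hypothesis mul_cont : continuous (fun xy : T * T => mul xy.1 xy.2).
Hypothesis H_mul : forall g h, H g -> H h -> H (mul g h).

Definition delta1 (m : nat) (b : T -> int) (gh : T * T) : int :=
  theta gh.1 m * b gh.2 - b (mul gh.1 gh.2) + b gh.1.

Definition delta2 (m : nat) (c : T * T -> int) (g h k : T) : int :=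
  theta g m * c (h, k) - c (mul g h, k) + c (g, mul h k) - c (g, h).

Lemma pz_neq0 : p%:Z != 0.
Proof. by rewrite eqz_nat -lt0n prime_gt0. Qed.

Lemma modulusS n : modulus p n.+1 = p%:Z * modulus p n.
Proof. by rewrite /modulus expnS PoszM. Qed.

Lemma modulus1 : modulus p 1 = p%:Z.
Proof. by rewrite /modulus expn1. Qed.

Lemma modulus_dvd k n : (k <= n)%N -> (modulus p k %| modulus p n)%Z.
Proof. by move=> le_kn; rewrite /modulus dvdzE /= dvdn_exp2l. Qed.

Lemma theta1 g : theta g 1 = 1.
Proof. by have [_ _ _ ->] := theta_orientation. Qed.

Lemma theta_modW k n g :
  (k <= n)%N -> (theta g n == theta g k %[mod modulus p k])%Z.
Proof.
elim: n => [|n IHn]; first by rewrite leqn0 => /eqP->.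
rewrite leq_eqVlt ltnS => /orP[/eqP-> // | le_kn].
have [/(_ g n) [_ theta_succ] _ _ _] := theta_orientation.
apply/eqP; rewrite -(eqP (IHn le_kn)); apply/eqP.
exact: eqz_modW (modulus_dvd le_kn) theta_succ.
Qed.

Lemma delta1_modW k n b gh :
  (k <= n)%N -> (delta1 n b gh == delta1 k b gh %[mod modulus p k])%Z.
Proof.
move=> /(theta_modW gh.1); rewrite !eqz_mod_dvd => theta_kn.
have -> : delta1 n b gh - delta1 k b gh
    = (theta gh.1 n - theta gh.1 k) * b gh.2 by rewrite /delta1; ring.
exact: dvdz_mulr.
Qed.

Lemma delta2_modW k n c g h l :
  (k <= n)%N -> (delta2 n c g h l == delta2 k c g h l %[mod modulus p k])%Z.
Proof.
move=> /(theta_modW g); rewrite !eqz_mod_dvd => theta_kn.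
have -> : delta2 n c g h l - delta2 k c g h l
    = (theta g n - theta g k) * c (h, l) by rewrite /delta2; ring.
exact: dvdz_mulr.
Qed.

Lemma delta1_congr m d b b' g h :
  (forall x, H x -> (b x == b' x %[mod d])%Z) -> H g -> H h ->
  (delta1 m b (g, h) == delta1 m b' (g, h) %[mod d])%Z.
Proof.
move=> bb' Hg Hh; move: (bb' _ Hg) (bb' _ Hh) (bb' _ (H_mul Hg Hh)).
rewrite !eqz_mod_dvd => dg dh dgh.
have -> : delta1 m b (g, h) - delta1 m b' (g, h) =
    theta g m * (b h - b' h) - (b (mul g h) - b' (mul g h)) + (b g - b' g).
  by rewrite /delta1 /=; ring.
by rewrite rpredD // rpredB // dvdz_mull.
Qed.

Lemma delta2_congr m d c c' g h l :
  (forall x y, H x -> H y -> (c (x, y) == c' (x, y) %[mod d])%Z) ->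
  H g -> H h -> H l ->
  (delta2 m c g h l == delta2 m c' g h l %[mod d])%Z.
Proof.
move=> cc' Hg Hh Hl.
move: (cc' _ _ Hh Hl) (cc' _ _ (H_mul Hg Hh) Hl) (cc' _ _ Hg (H_mul Hh Hl))
  (cc' _ _ Hg Hh); rewrite !eqz_mod_dvd => d1 d2 d3 d4.
have -> : delta2 m c g h l - delta2 m c' g h l =
    theta g m * (c (h, l) - c' (h, l)) - (c (mul g h, l) - c' (mul g h, l))
    + (c (g, mul h l) - c' (g, mul h l)) - (c (g, h) - c' (g, h)).
  by rewrite /delta2; ring.
by rewrite rpredB // rpredD // rpredB // dvdz_mull.
Qed.

Lemma delta1_lin m b e k gh :
  delta1 m (fun x => b x + k * e x) gh = delta1 m b gh + k * delta1 m e gh.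
Proof. by rewrite /delta1; ring. Qed.

Lemma delta2Z m k c g h l :
  delta2 m (fun gh => k * c gh) g h l = k * delta2 m c g h l.
Proof. by rewrite /delta2; ring. Qed.

Lemma delta2_delta1 m b g h l :
  (delta2 m (delta1 m b) g h l == 0 %[mod modulus p m])%Z.
Proof.
have [_ theta_mul _ _] := theta_orientation.
have := theta_mul g h m; rewrite eq_sym !eqz_mod_dvd subr0 => theta_gh.
have -> : delta2 m (delta1 m b) g h l
    = (theta g m * theta h m - theta (mul g h) m) * b l.
  by rewrite /delta2 /delta1 /= mul_assoc; ring.
exact: dvdz_mulr.
Qed.

Lemma cochain2_delta1 m b :
  cochain1 p H m b -> cochain2 p H m (delta1 m b).
Proof.
move=> bH; have [_ _ theta_loc _] := theta_orientation.
have fstH (gh : T * T) : (H `*` H) gh -> H gh.1 by case.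
have sndH (gh : T * T) : (H `*` H) gh -> H gh.2 by case.
have mulH (gh : T * T) : (H `*` H) gh -> H (mul gh.1 gh.2).
  by case=> ? ?; apply: H_mul.
apply: loc_const_modD; first apply: loc_const_modB.
- apply: loc_const_modM.
  + by apply: loc_const_mod_comp (theta_loc m) => //; apply: continuous_fst.
  + exact: loc_const_mod_comp (@continuous_snd _ _) sndH bH.
- exact: loc_const_mod_comp mul_cont mulH bH.
- exact: loc_const_mod_comp (@continuous_fst _ _) fstH bH.
Qed.

Lemma cocycle1E m c : cocycle1 p mul theta H m c <->
  cochain1 p H m c /\
  forall g h, H g -> H h -> (delta1 m c (g, h) == 0 %[mod modulus p m])%Z.
Proof.
have cocycleE g h : (c (mul g h) == c g + theta g m * c h %[mod modulus p m])%Z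
    = (delta1 m c (g, h) == 0 %[mod modulus p m])%Z.
  have -> : delta1 m c (g, h) = - (c (mul g h) - (c g + theta g m * c h)).
    by rewrite /delta1 /=; ring.
  by rewrite !eqz_mod_dvd subr0 rpredN.
by split=> -[cH c_closed]; split=> // g h Hg Hh;
  [rewrite -cocycleE | rewrite cocycleE]; apply: c_closed.
Qed.

Lemma coboundary1_mod_pP c : coboundary1 p theta H 1 c <->
  (forall g, H g -> (c g == 0 %[mod p])%Z).
Proof.
split=> [[a ca] g Hg | c0].
  by have := ca g Hg; rewrite theta1 mul1r subrr modulus1.
by exists 0 => g Hg; rewrite mulr0 subr0 modulus1; apply: c0.
Qed.

Lemma delta1_lift n b c e g h :
  (forall x, H x -> b x = c x + p%:Z * e x) -> H g -> H h ->
  (delta1 n.+1 b (g, h) ==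
     delta1 n.+1 c (g, h) + p%:Z * delta1 n e (g, h) %[mod modulus p n.+1])%Z.
Proof.
move=> bce Hg Hh.
have b_eq : forall x, H x -> (b x == c x + p%:Z * e x %[mod modulus p n.+1])%Z.
  by move=> x Hx; rewrite bce.
rewrite (eqP (delta1_congr n.+1 b_eq Hg Hh)) delta1_lin eqz_modDl.
by rewrite modulusS eqz_mod_mul2l ?pz_neq0 // delta1_modW.
Qed.

Lemma bockstein_cocycle n b z : cochain1 p H n.+1 b ->
  (forall g h, H g -> H h -> p%:Z * z (g, h) = delta1 n.+1 b (g, h)) ->
  cocycle2 p mul theta H n z.
Proof.
move=> bH pz; split.
  apply/(loc_const_mod_mul2l _ _ _ pz_neq0); rewrite -modulusS.
  apply: loc_const_mod_eq_in (cochain2_delta1 bH).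
  by move=> [g h] [/= Hg Hh]; rewrite pz.
have pz_mod x y : H x -> H y ->
    (p%:Z * z (x, y) == delta1 n.+1 b (x, y) %[mod modulus p n.+1])%Z.
  by move=> Hx Hy; rewrite pz.
move=> g h l Hg Hh Hl; change (delta2 n z g h l == 0 %[mod modulus p n])%Z.
rewrite -(eqz_mod_mul2l _ _ _ pz_neq0) -modulusS mulr0.
have := delta2_modW z g h l (leqnSn n).
rewrite -(eqz_mod_mul2l _ _ _ pz_neq0) -modulusS => /eqP <-.
rewrite -delta2Z (eqP (delta2_congr _ pz_mod Hg Hh Hl)).
exact: delta2_delta1.
Qed.

Lemma H2_mulp_injective_of_H1_surjective n :
  H1_reduction_surjective p mul theta H n.+1 ->
  H2_mulp_injective p mul theta H n.+1.
Proof.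
move=> surj c _ [b [bH pc_delta_b]].
have b_cocycle : cocycle1 p mul theta H 1 b.
  apply/cocycle1E; split; first exact: loc_const_mod_dvd (modulus_dvd _) bH.
  move=> g h Hg Hh; have := delta1_modW b (g, h) (ltn0Sn n).
  move/eqP <-; have := pc_delta_b g h Hg Hh; rewrite modulusS.
  by move/(eqz_modW (dvdz_mulr _ (dvdzz _)))/eqP <-; rewrite modzMr mod0z.
have [c' [/cocycle1E [c'H c'_closed] /coboundary1_mod_pP c'_b]] :=
  surj b b_cocycle.
pose e x := ((b x - c' x) %/ p)%Z.
have b_lift x : H x -> b x = c' x + p%:Z * e x.
  move=> Hx; have := c'_b x Hx; rewrite eqz_mod_dvd subr0 -rpredN opprB.
  by move=> p_dvd; rewrite mulrC divzK // addrC subrK.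
exists e; split.
  apply/(loc_const_mod_mul2l _ _ _ pz_neq0); rewrite -modulusS.
  apply: loc_const_mod_eq_in (loc_const_modB bH c'H).
  by move=> x Hx; rewrite b_lift // addrAC subrr add0r.
move=> g h Hg Hh; rewrite -(eqz_mod_mul2l _ _ _ pz_neq0) -modulusS.
apply/eqP; rewrite (eqP (pc_delta_b g h Hg Hh)).
have := delta1_lift n b_lift Hg Hh; rewrite /delta1 /= => /eqP->.
by rewrite -modzDml (eqP (c'_closed g h Hg Hh)) mod0z add0r.
Qed.

Lemma H1_surjective_of_H2_mulp_injective n :
  H2_mulp_injective p mul theta H n.+1 ->
  H1_reduction_surjective p mul theta H n.+1.
Proof.
move=> inj c /cocycle1E [cH c_closed].
rewrite /cochain1 modulus1 in cH; rewrite modulus1 in c_closed.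
(* The representative in [0, p) is locally constant outright, so it is a
   continuous cochain modulo every p^m. *)
pose ch x := (c x %% p)%Z.
have chH m : cochain1 p H m ch.
  exact: loc_const_mod_dvd (dvdz0 _) (loc_const_mod_modz cH).
have ch_c x : (ch x == c x %[mod p])%Z by apply/eqP; apply: modz_mod.
have p_dvd_delta g h : H g -> H h -> (p%:Z %| delta1 n.+1 ch (g, h))%Z.
  move=> Hg Hh; rewrite -[delta1 _ _ _]subr0 -eqz_mod_dvd; apply/eqP.
  have := delta1_modW ch (g, h) (ltn0Sn n); rewrite modulus1 => /eqP->.
  rewrite (eqP (delta1_congr 1 (fun x _ => ch_c x) Hg Hh)).
  exact/eqP/c_closed.
pose z gh := (delta1 n.+1 ch gh %/ p)%Z.
have pz g h : H g -> H h -> p%:Z * z (g, h) = delta1 n.+1 ch (g, h).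
  by move=> Hg Hh; rewrite mulrC divzK // p_dvd_delta.
have z_bound : coboundary2 p mul theta H n.+1 (fun gh => p%:Z * z gh).
  by exists ch; split=> // g h Hg Hh; rewrite pz.
have [e [eH z_delta_e]] := inj z (bockstein_cocycle (chH _) pz) z_bound.
pose c' x := ch x - p%:Z * e x.
have ch_lift x : H x -> ch x = c' x + p%:Z * e x by rewrite subrK.
exists c'; split.
  apply/cocycle1E; split.
    apply: loc_const_modB (chH _) _; rewrite modulusS.
    exact/(loc_const_mod_mul2l _ _ _ pz_neq0).
  move=> g h Hg Hh; have := delta1_lift n ch_lift Hg Hh.
  rewrite -pz // => /eqP pz_c'.
  have := z_delta_e g h Hg Hh; rewrite -(eqz_mod_mul2l _ _ _ pz_neq0) -modulusS.
  move=> /eqP pz_e; rewrite -(eqz_modDr (p%:Z * delta1 n e (g, h))) add0r.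
  by apply/eqP; rewrite -pz_c' pz_e.
apply/coboundary1_mod_pP => g Hg; rewrite /c' addrAC eqz_mod_dvd subr0.
by rewrite rpredB ?dvdz_mulr // -eqz_mod_dvd.
Qed.

Lemma H1_surjective_iff_H2_mulp_injective n :
  H1_reduction_surjective p mul theta H n.+1 <->
  H2_mulp_injective p mul theta H n.+1.
Proof.
split; [exact: H2_mulp_injective_of_H1_surjective |
        exact: H1_surjective_of_H2_mulp_injective].
Qed.

End Bockstein.

Theorem mainTheorem8 (p : nat) (T : topologicalType)
    (mul : T -> T -> T) (one : T) (inv : T -> T) (theta : T -> nat -> int) :
  prime p ->
  is_profinite_group mul one inv ->
  is_orientation p mul theta ->
  (cyclotomic p mul one inv theta <->
   (forall n : nat, (1 <= n)%N ->
      forall H : set T, is_closed_subgroup mul one inv H ->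
        H2_mulp_injective p mul theta H n)).
Proof.
move=> p_prime [mul_assoc _ _ mul_cont _] theta_orientation.
have bockstein H n : is_closed_subgroup mul one inv H ->
    H1_reduction_surjective p mul theta H n.+1 <->
    H2_mulp_injective p mul theta H n.+1.
  by case=> _ _ H_mul _; apply: H1_surjective_iff_H2_mulp_injective.
split=> [cyc [|n] // _ H hH | inj H hH [|n] // _].
  by apply/(bockstein H n hH); apply: cyc.
by apply/(bockstein H n hH); apply: inj.
Qed.
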